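(* In a distributive quasi-orthomodular nearsemilattice $A$, every initial segment $[0,p] = \{x \in A : x \le p\}$ is a Boolean algebra.
   Context: A nearsemilattice is a poset $A$ with least element $0$ in which any two elements having a common upper bound have a join $x \vee y$ (a partial operation). It is distributive if whenever $y \vee z$ exists and $x \le y \vee z$, then $x = y' \vee z'$ for some $y' \le y$ and $z' \le z$. An orthogonality on $A$ is a binary relation $\perp$ with: $x \perp y$ implies $y \perp x$; $x \le y$ and $y \perp z$ imply $x \perp z$; $x \perp 0$ for all $x$. A quasi-orthomodular nearsemilattice is a nearsemilattice with an orthogonality such that: (a) if $x \perp y$ then $x \vee y$ exists; (b) if $x \le y$ then $y = x \vee z$ for some $z$ with $x \perp z$; (c) if $x \perp y$, $x \perp z$ and $y \le x \vee z$, then $y \le z$. *)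

Section Defs.
Variable A : Type.
Variable le : A -> A -> Prop.

Definition partial_order : Prop :=
  (forall x, le x x) /\
  (forall x y z, le x y -> le y z -> le x z) /\
  (forall x y, le x y -> le y x -> x = y).

Definition is_join (x y j : A) : Prop :=
  le x j /\ le y j /\ forall w, le x w -> le y w -> le j w.

Definition nearsemilattice (zero : A) : Prop :=
  partial_order /\
  (forall x, le zero x) /\
  (forall x y u, le x u -> le y u -> exists j, is_join x y j).

Definition distributive_ns : Prop :=
  forall x y z j, is_join y z j -> le x j ->
    exists y' z', le y' y /\ le z' z /\ is_join y' z' x.

Definition orthogonality (zero : A) (perp : A -> A -> Prop) : Prop :=
  (forall x y, perp x y -> perp y x) /\
  (forall x y z, le x y -> perp y z -> perp x z) /\
  (forall x, perp x zero).

Definition quasi_orthomodular_ns (zero : A) (perp : A -> A -> Prop) : Prop :=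
  nearsemilattice zero /\ orthogonality zero perp /\
  (* (a) *) (forall x y, perp x y -> exists j, is_join x y j) /\
  (* (b) *) (forall x y, le x y -> exists z, perp x z /\ is_join x z y) /\
  (* (c) *) (forall x y z j, perp x y -> perp x z -> is_join x z j ->
                le y j -> le y z).

Definition is_join_in (S : A -> Prop) (x y j : A) : Prop :=
  S j /\ le x j /\ le y j /\ forall w, S w -> le x w -> le y w -> le j w.

Definition is_meet_in (S : A -> Prop) (x y m : A) : Prop :=
  S m /\ le m x /\ le m y /\ forall w, S w -> le w x -> le w y -> le w m.

Definition boolean_algebra_on (S : A -> Prop) : Prop :=
  exists (join meet : A -> A -> A) (compl : A -> A) (bot top : A),
    S bot /\ S top /\
    (forall x, S x -> le bot x /\ le x top) /\
    (forall x y, S x -> S y -> is_join_in S x y (join x y)) /\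
    (forall x y, S x -> S y -> is_meet_in S x y (meet x y)) /\
    (forall x y z, S x -> S y -> S z ->
       meet x (join y z) = join (meet x y) (meet x z)) /\
    (forall x, S x -> S (compl x) /\
       join x (compl x) = top /\ meet x (compl x) = bot).

Definition segment (p : A) : A -> Prop := fun x => le x p.

End Defs.

(* In [0,p] every y has an orthocomplement y' (axiom (b)), with y v y' = p.
   Distributivity splits any x <= p as x = a v b with a <= y and b <= y';
   then a is the meet of x and y: if w <= x and w <= y, then b is orthogonal
   to both w and a, so axiom (c) forces w <= a.  Meets therefore exist,
   distributivity of the lattice [0,p] is the same splitting argument applied
   to x /\ (y v z), and x /\ x' = 0 because an element orthogonal to itself
   is 0. *)

From Stdlib Require Import ClassicalEpsilon.

Section Segment.

Variable A : Type.
Variable le : A -> A -> Prop.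
Variable zero : A.
Variable perp : A -> A -> Prop.

Hypothesis le_refl : forall x, le x x.
Hypothesis le_trans : forall x y z, le x y -> le y z -> le x z.
Hypothesis le_anti : forall x y, le x y -> le y x -> x = y.
Hypothesis zero_le : forall x, le zero x.
Hypothesis bounded_join : forall x y u, le x u -> le y u -> exists j, is_join A le x y j.
Hypothesis perp_sym : forall x y, perp x y -> perp y x.
Hypothesis perp_le : forall x y z, le x y -> perp y z -> perp x z.
Hypothesis perp_zero : forall x, perp x zero.
Hypothesis orthocomplement : forall x y, le x y -> exists z, perp x z /\ is_join A le x z y.
Hypothesis orthomodular :
  forall x y z j, perp x y -> perp x z -> is_join A le x z j -> le y j -> le y z.
Hypothesis distr : distributive_ns A le.

Lemma is_join_unique x y j j' : is_join A le x y j -> is_join A le x y j' -> j = j'.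
Proof. intros [h1 [h2 h3]] [k1 [k2 k3]]; apply le_anti; auto. Qed.

Lemma is_join_sym x y j : is_join A le x y j -> is_join A le y x j.
Proof. intros [h1 [h2 h3]]; repeat split; auto. Qed.

Lemma perp_leW x y a b : le x a -> le y b -> perp a b -> perp x y.
Proof.
  intros xa yb ab; apply perp_sym, (perp_le y b); auto.
  apply perp_sym, (perp_le x a); auto.
Qed.

Lemma perp_self_eq0 w : perp w w -> w = zero.
Proof.
  intros ww; apply le_anti; [|apply zero_le].
  apply (orthomodular w w zero w ww (perp_zero w)); [|apply le_refl].
  repeat split; auto.
Qed.

Lemma is_meet_in_segment p x y :
  le x p -> le y p -> exists m, is_meet_in A le (segment A le p) x y m.
Proof.
  intros xp yp.
  destruct (orthocomplement y p yp) as [y' [yy' jy]].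
  destruct (distr x y y' p jy xp) as [a [b [ay [by' jx]]]].
  assert (bperpy : perp b y) by exact (perp_leW b y y' y by' (le_refl y) (perp_sym _ _ yy')).
  destruct jx as [ax [bx jx]].
  exists a; repeat split; auto.
  - apply (le_trans a x p); auto.
  - intros w _ wx wy.
    apply (orthomodular b w a x); auto.
    + apply (perp_leW b w b y); auto.
    + apply (perp_leW b a b y); auto.
    + apply is_join_sym; repeat split; auto.
Qed.

Lemma meet_join_distr p x y z j m a b l :
  is_join A le y z j ->
  is_meet_in A le (segment A le p) x j m ->
  is_meet_in A le (segment A le p) x y a ->
  is_meet_in A le (segment A le p) x z b ->
  is_join A le a b l -> m = l.
Proof.
  intros jyz [mS [mx [mj mg]]] [aS [ax [ay ag]]] [bS [bx [bz bg]]] [al [bl lg]].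
  pose proof jyz as [yj [zj _]].
  apply le_anti.
  - destruct (distr m y z j jyz mj) as [y1 [z1 [y1y [z1z [y1m [z1m mg']]]]]].
    apply mg'.
    + apply (le_trans y1 a l); auto.
      apply ag; eauto; apply (le_trans y1 m); auto.
    + apply (le_trans z1 b l); auto.
      apply bg; eauto; apply (le_trans z1 m); auto.
  - apply lg; apply mg; eauto.
Qed.

Theorem segment_boolean_algebra p : boolean_algebra_on A le (segment A le p).
Proof.
  set (S := segment A le p).
  pose (Inh := inhabits zero).
  pose (join x y := epsilon Inh (is_join A le x y)).
  pose (meet x y := epsilon Inh (is_meet_in A le S x y)).
  pose (compl x := epsilon Inh (fun z => perp x z /\ is_join A le x z p)).
  assert (join_spec : forall x y, S x -> S y -> is_join A le x y (join x y))
    by (intros x y hx hy; apply epsilon_spec; eapply bounded_join; eauto).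
  assert (join_S : forall x y, S x -> S y -> S (join x y))
    by (intros x y hx hy; apply (join_spec x y hx hy); auto).
  assert (meet_spec : forall x y, S x -> S y -> is_meet_in A le S x y (meet x y))
    by (intros x y hx hy; apply epsilon_spec, is_meet_in_segment; auto).
  assert (compl_spec : forall x, S x -> perp x (compl x) /\ is_join A le x (compl x) p)
    by (intros x hx; apply epsilon_spec, orthocomplement; auto).
  exists join, meet, compl, zero, p.
  split; [apply zero_le|]. split; [apply le_refl|].
  split; [intros x hx; split; [apply zero_le|exact hx]|].
  split.
  { intros x y hx hy; destruct (join_spec x y hx hy) as [jx [jy jl]].
    repeat split; auto. }
  split; [exact meet_spec|].
  split.
  { intros x y z hx hy hz.
    apply (meet_join_distr p x y z (join y z) _ (meet x y) (meet x z)); auto.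
    apply join_spec; apply meet_spec; auto. }
  intros x hx; destruct (compl_spec x hx) as [xc jx].
  assert (cS : S (compl x)) by apply jx.
  split; [exact cS|split].
  - apply (is_join_unique x (compl x)); auto.
  - destruct (meet_spec x (compl x) hx cS) as [_ [mx [mc _]]].
    apply perp_self_eq0, (perp_leW _ _ x (compl x)); auto.
Qed.

End Segment.

Theorem corollary5 (A : Type) (le : A -> A -> Prop) (zero : A)
    (perp : A -> A -> Prop) :
  quasi_orthomodular_ns A le zero perp ->
  distributive_ns A le ->
  forall p : A, boolean_algebra_on A le (segment A le p).
Proof.
  intros [[[refl [trans anti]] [zero_le bjoin]] [[psym [ple p0]] [_ [orth omod]]]] distr p.
  exact (segment_boolean_algebra A le zero perp refl trans anti zero_le bjoin
           psym ple p0 orth omod distr p).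
Qed.
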